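(* Let $n\ge1$, let $\Theta$ be a nonzero complex skew-symmetric $n\times n$ matrix, and let $\Gamma$ be a discrete subgroup of $\mathrm{Aut}(\mathcal H,J_\Theta)$. Suppose there is $\phi\in\Gamma$ of the form $\phi(z)=(tz^0+is,\ t^{1/2}Az')$ with $0<t<1$, $s\in\mathbb R$, $A\in U_\Theta$. Then every $\psi\in\Gamma$ is of the form $\psi(z)=(az^0+ib,\ a^{1/2}Bz')$ with $a>0$, $b\in\mathbb R$, $B\in U_\Theta$ (i.e. with $w'=0$ in the normal form below), and $b(1-t)=s(1-a)$; in particular $\frac{b}{1-a}=\frac{s}{1-t}$ whenever $a\neq1$.
   Context: Write points of $\mathbb C^{n+1}$ as $z=(z^0,z')$, $z'=(z^1,\dots,z^n)$. $\mathcal H=\{(z^0,z')\in\mathbb C\times\mathbb C^n:\ \mathrm{Re}\,z^0+\|z'\|^2<0\}$ (Siegel half space). For a complex skew-symmetric $n\times n$ matrix $\Theta=(\Theta_{\alpha\beta})$, $J_\Theta$ is the almost complex structure on $\mathbb C^{n+1}$ $J_\Theta=i\frac{\partial}{\partial z^0}\otimes dz^0+\sum_\alpha\big(i\frac{\partial}{\partial z^\alpha}+2\sum_\beta\Theta_{\alpha\beta}z^\beta\frac{\partial}{\partial \bar z^0}\big)\otimes dz^\alpha-i\frac{\partial}{\partial \bar z^0}\otimes d\bar z^0+\sum_\alpha\big(-i\frac{\partial}{\partial \bar z^\alpha}+2\sum_\beta\overline{\Theta_{\alpha\beta}}\bar z^\beta\frac{\partial}{\partial z^0}\big)\otimes d\bar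 z^\alpha$ (integrable iff $\Theta=0$). $\mathrm{Aut}(\mathcal H,J_\Theta)$ is the group of $J_\Theta$-holomorphic diffeomorphisms of $\mathcal H$ with compact-open topology. $U_\Theta=\{A\in\mathbb C^{n\times n}: A^t\bar A=I,\ A^t\Theta A=\Theta\}$, a compact group. For $w'\in\mathbb C^n$, $h_{w'}(z')=-\|w'\|^2-2\langle z',\bar w'\rangle+i\big(\sum\Theta_{\alpha\beta}z^\alpha w^\beta+\sum\overline{\Theta_{\alpha\beta}}\,\bar z^\alpha\bar w^\beta\big)$, where $\langle z',\bar w'\rangle=\sum_\alpha z^\alpha\bar w^\alpha$. It is known (and may be assumed) that for $\Theta\neq0$ every $\phi\in\mathrm{Aut}(\mathcal H,J_\Theta)$ can be written uniquely as $\phi(z)=(tz^0+h_{w'}(z')+is,\ t^{1/2}Az'+w')$ with $t>0$, $s\in\mathbb R$, $w'\in\mathbb C^n$, $A\in U_\Theta$, and every such map is an automorphism. *)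

From Stdlib Require Import Reals.
From mathcomp Require Import all_boot.

Set Implicit Arguments.
Unset Strict Implicit.

Local Open Scope R_scope.

Record C := mkC { Cre : R ; Cim : R }.

Definition C0 : C := mkC 0 0.
Definition RtoC (x : R) : C := mkC x 0.
Definition Ci : C := mkC 0 1.
Definition Cplus (z w : C) : C := mkC (Cre z + Cre w) (Cim z + Cim w).
Definition Copp (z : C) : C := mkC (- Cre z) (- Cim z).
Definition Cminus (z w : C) : C := Cplus z (Copp w).
Definition Cmult (z w : C) : C :=
  mkC (Cre z * Cre w - Cim z * Cim w) (Cre z * Cim w + Cim z * Cre w).
Definition Cconj (z : C) : C := mkC (Cre z) (- Cim z).
Definition Cnorm2 (z : C) : R := Cre z * Cre z + Cim z * Cim z.

Definition Rsum (n : nat) (F : 'I_n -> R) : R := \big[Rplus/0]_(i < n) F i.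
Definition Csum (n : nat) (F : 'I_n -> C) : C := \big[Cplus/C0]_(i < n) F i.

Definition Vec (n : nat) := 'I_n -> C.
Definition Pt (n : nat) := (C * Vec n)%type.

Definition eqPt (n : nat) (p q : Pt n) : Prop :=
  fst p = fst q /\ forall i : 'I_n, snd p i = snd q i.

Definition dist2 (n : nat) (p q : Pt n) : R :=
  Cnorm2 (Cminus (fst p) (fst q)) + Rsum (fun i => Cnorm2 (Cminus (snd p i) (snd q i))).

Definition inH (n : nat) (z : Pt n) : Prop :=
  Cre (fst z) + Rsum (fun i => Cnorm2 (snd z i)) < 0.

Definition Mat (n : nat) := 'I_n -> 'I_n -> C.

Definition skew (n : nat) (Th : Mat n) : Prop :=
  forall a b : 'I_n, Th a b = Copp (Th b a).

Definition nonzero_mat (n : nat) (Th : Mat n) : Prop :=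
  exists a b : 'I_n, Th a b <> C0.

Definition kron (n : nat) (a b : 'I_n) : C := if a == b then RtoC 1 else C0.

Definition inU (n : nat) (Th : Mat n) (A : Mat n) : Prop :=
  (forall a b : 'I_n, Csum (fun k => Cmult (A k a) (Cconj (A k b))) = kron a b) /\
  (forall a b : 'I_n,
     Csum (fun k => Csum (fun l => Cmult (Cmult (A k a) (Th k l)) (A l b))) = Th a b).

Definition hw (n : nat) (Th : Mat n) (w z : Vec n) : C :=
  Cplus (Cplus (RtoC (- Rsum (fun a => Cnorm2 (w a))))
               (Cmult (RtoC (-2)) (Csum (fun a => Cmult (z a) (Cconj (w a))))))
        (Cmult Ci
           (Cplus (Csum (fun a => Csum (fun b => Cmult (Cmult (Th a b) (z a)) (w b))))
                  (Csum (fun a => Csum (fun b =>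
                       Cmult (Cmult (Cconj (Th a b)) (Cconj (z a))) (Cconj (w b))))))).

Definition nf (n : nat) (Th : Mat n) (t s : R) (w : Vec n) (A : Mat n)
  (z : Pt n) : Pt n :=
  (Cplus (Cplus (Cmult (RtoC t) (fst z)) (hw Th w (snd z))) (Cmult Ci (RtoC s)),
   fun a => Cplus (Cmult (RtoC (sqrt t)) (Csum (fun b => Cmult (A a b) (snd z b)))) (w a)).

Definition zeroVec (n : nat) : Vec n := fun _ => C0.
Arguments zeroVec n : clear implicits.

(* Maps are modelled as functions Pt n -> Pt n; only their values on H matter. *)
Definition agreeOnH (n : nat) (f g : Pt n -> Pt n) : Prop :=
  forall z, inH z -> eqPt (f z) (g z).

(* membership in Aut(H, J_Theta), via the (assumed) normal form *)
Definition isAut (n : nat) (Th : Mat n) (f : Pt n -> Pt n) : Prop :=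
  exists (t s : R) (w : Vec n) (A : Mat n),
    0 < t /\ inU Th A /\ agreeOnH f (nf Th t s w A).

Definition isSubgroup (n : nat) (Th : Mat n) (G : (Pt n -> Pt n) -> Prop) : Prop :=
  (forall f, G f -> isAut Th f) /\
  (exists e, G e /\ agreeOnH e (fun z => z)) /\
  (forall f g, G f -> G g -> exists h, G h /\ agreeOnH h (fun z => f (g z))) /\
  (forall f, G f -> exists h, G h /\ agreeOnH (fun z => h (f z)) (fun z => z)
                               /\ agreeOnH (fun z => f (h z)) (fun z => z)).

(* sequential compactness of K in C^{n+1} (= compactness, metric space) *)
Definition compactPt (n : nat) (K : Pt n -> Prop) : Prop :=
  forall u : nat -> Pt n, (forall k, K (u k)) ->
    exists (phi : nat -> nat) (p : Pt n),
      (forall k, (phi k < phi (S k))%nat) /\ K p /\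
      (forall eps, 0 < eps -> exists N : nat, forall k, (N <= k)%nat ->
          dist2 (u (phi k)) p < eps).

(* discreteness in the compact-open topology (= topology of uniform
   convergence on compact subsets of H, the target being metric):
   every element of G has a basic neighbourhood
   { g : sup_{z in K} |g z - f z| < eps } meeting G only in f. *)
Definition isDiscrete (n : nat) (G : (Pt n -> Pt n) -> Prop) : Prop :=
  forall f, G f ->
    exists (K : Pt n -> Prop) (eps : R),
      compactPt K /\ (forall z, K z -> inH z) /\ 0 < eps /\
      forall g, G g -> (forall z, K z -> dist2 (g z) (f z) < eps * eps) ->
        agreeOnH g f.

(* In the normal form used here, closure of Gamma under composition with phi already forces
   w' = 0: the real part of the first coordinate of phi o psi at (x^0, z') is
   t (a x^0 - |w'|^2 - 2 Re<z', w'>), and since phi o psi is again in normal form this equals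
   a' x^0 - |w''|^2 - 2 Re<z', w''> for all z'; hence w'' = t w' and |w''|^2 = t |w'|^2, so w' = 0.
   For psi = (a, b, B) the conjugates phi^k psi phi^-k have dilation a, translation
   c + t^k (b - c) with c = s (1 - a) / (1 - t), and linear part U_k B U_k^-1 with U_k in U_Theta.
   U_Theta is compact (its entries are bounded by 1), so there are arbitrarily large i < j with
   U_i close to U_j; then (phi^j psi phi^-j) (phi^i psi phi^-i)^-1 is
   (z^0, z') |-> (z^0 + i (t^j - t^i) (b - c), L z') with L close to the identity, hence uniformly
   close to the identity on compact subsets of H. Discreteness makes it the identity, so b = c. *)

From Pilot Require Import Defs.
From Stdlib Require Import Reals.
From mathcomp Require Import all_boot.
Local Open Scope R_scope.

From Stdlib Require Import Lra Lia ZArith FunctionalExtensionality Classical IndefiniteDescription.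
From HB Require Import structures.
(* The binomial coefficient [C] of Reals shadows the complex numbers of Defs. *)
Import Defs.

Set Warnings "-notation-overridden,-redundant-canonical-projection".
Set Implicit Arguments.
Unset Strict Implicit.

Lemma C_ext (z w : C) : Cre z = Cre w -> Cim z = Cim w -> z = w.
Proof. by case: z; case: w => ? ? ? ? /= -> ->. Qed.

Ltac Cring := apply: C_ext; unfold Cplus, Cmult, Copp, Cminus, Cconj, RtoC, Ci, C0; simpl; ring.

Lemma Cplus_assoc : associative Cplus. Proof. by move=> ? ? ?; Cring. Qed.
Lemma Cplus_comm : commutative Cplus. Proof. by move=> ? ?; Cring. Qed.
Lemma Cplus_0l : left_id C0 Cplus. Proof. by move=> ?; Cring. Qed.
HB.instance Definition _ := Monoid.isComLaw.Build C C0 Cplus Cplus_assoc Cplus_comm Cplus_0l.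

Lemma Rplus_associative : associative Rplus. Proof. by move=> ? ? ?; ring. Qed.
HB.instance Definition _ :=
  Monoid.isComLaw.Build R 0 Rplus Rplus_associative Rplus_comm Rplus_0_l.

Section Sums.
Variable n : nat.
Implicit Types (F G : 'I_n -> R) (f g : 'I_n -> C).

Lemma Rsum_ext F G : (forall i, F i = G i) -> Rsum F = Rsum G.
Proof. by move=> FG; apply: eq_bigr => i _. Qed.

Lemma Csum_ext f g : (forall i, f i = g i) -> Csum f = Csum g.
Proof. by move=> fg; apply: eq_bigr => i _. Qed.

Lemma Rsum_eq0 F : (forall i, F i = 0) -> Rsum F = 0.
Proof. by move=> F0; apply: big1 => i _. Qed.

Lemma Csum_eq0 f : (forall i, f i = C0) -> Csum f = C0.
Proof. by move=> f0; apply: big1 => i _. Qed.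

Lemma Rsum_split F G : Rsum (fun i => F i + G i) = Rsum F + Rsum G.
Proof. exact: big_split. Qed.

Lemma Rsum_opp F : Rsum (fun i => - F i) = - Rsum F.
Proof. by symmetry; apply: (big_morph Ropp) => [x y|]; ring. Qed.

Lemma Rsum_mull c F : Rsum (fun i => c * F i) = c * Rsum F.
Proof. by symmetry; apply: (big_morph (Rmult c)) => [x y|]; ring. Qed.

Lemma Rsum_const c : Rsum (fun _ : 'I_n => c) = INR n * c.
Proof.
rewrite /Rsum; elim: n => [|m IHm]; first by rewrite big_ord0 /=; ring.
by rewrite big_ord_recr IHm S_INR /=; ring.
Qed.

Lemma Rsum_le F G : (forall i, F i <= G i) -> Rsum F <= Rsum G.
Proof. by move=> FG; apply: (big_ind2 Rle) => // *; lra. Qed.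

Lemma Rsum_ge0 F : (forall i, 0 <= F i) -> 0 <= Rsum F.
Proof. by move=> F0; apply: (big_ind (Rle 0)) => // *; lra. Qed.

Lemma Rsum_ge_term F i : (forall j, 0 <= F j) -> F i <= Rsum F.
Proof.
move=> F0; rewrite /Rsum (bigD1 i) //=.
rewrite -{1}[F i]Rplus_0_r; apply: Rplus_le_compat_l.
by apply: (big_ind (Rle 0)) => // *; lra.
Qed.

Lemma Cre_Csum f : Cre (Csum f) = Rsum (fun i => Cre (f i)).
Proof. exact: (big_morph Cre). Qed.

Lemma Cim_Csum f : Cim (Csum f) = Rsum (fun i => Cim (f i)).
Proof. exact: (big_morph Cim). Qed.

Lemma Csum_split f g : Csum (fun i => Cplus (f i) (g i)) = Cplus (Csum f) (Csum g).
Proof. exact: big_split. Qed.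

Lemma Csum_opp f : Csum (fun i => Copp (f i)) = Copp (Csum f).
Proof. by symmetry; apply: (big_morph Copp) => [x y|]; Cring. Qed.

Lemma Csum_sub f g : Csum (fun i => Cminus (f i) (g i)) = Cminus (Csum f) (Csum g).
Proof. by rewrite /Cminus Csum_split Csum_opp. Qed.

Lemma Csum_mull c f : Csum (fun i => Cmult c (f i)) = Cmult c (Csum f).
Proof. by symmetry; apply: (big_morph (Cmult c)) => [x y|]; Cring. Qed.

Lemma Csum_mulr c f : Csum (fun i => Cmult (f i) c) = Cmult (Csum f) c.
Proof. by symmetry; apply: (big_morph (Cmult^~ c)) => [x y|]; Cring. Qed.

Lemma Csum_conj f : Csum (fun i => Cconj (f i)) = Cconj (Csum f).
Proof. by symmetry; apply: (big_morph Cconj) => [x y|]; Cring. Qed.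

Lemma Csum_exchange (f : 'I_n -> 'I_n -> C) :
  Csum (fun i => Csum (fun j => f i j)) = Csum (fun j => Csum (fun i => f i j)).
Proof. exact: exchange_big. Qed.

Lemma Csum_kron f j : Csum (fun i => Cmult (f i) (kron j i)) = f j.
Proof.
rewrite /Csum (bigD1 j) //= big1 => [|i /negbTE ij]; rewrite /kron.
  by rewrite eqxx; Cring.
by rewrite eq_sym ij; Cring.
Qed.

Lemma Cnorm2_ge0 z : 0 <= Cnorm2 z.
Proof. rewrite /Cnorm2; nra. Qed.

(* A crude bound: any constant depending only on [n] will do. *)
Lemma Cnorm2_Csum_le f : Cnorm2 (Csum f) <= 2 ^ n * Rsum (fun i => Cnorm2 (f i)).
Proof.
rewrite /Csum /Rsum; elim: n f => [|m IHm] f.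
  by rewrite !big_ord0 /Cnorm2 /=; lra.
rewrite !big_ord_recr /=.
set S := \big[Cplus/C0]_(i < m) _; set S2 := \big[Rplus/0]_(i < m) _.
have IH : Cnorm2 S <= 2 ^ m * S2 := IHm _.
have parallelogram : Cnorm2 (Cplus S (f ord_max)) <= 2 * Cnorm2 S + 2 * Cnorm2 (f ord_max).
  have := Rle_0_sqr (Cre S - Cre (f ord_max)).
  have := Rle_0_sqr (Cim S - Cim (f ord_max)).
  by rewrite /Cnorm2 /Cplus /Rsqr /=; nra.
have := Cnorm2_ge0 (f ord_max); have := pow_R1_Rle 2 m ltac:(lra); nra.
Qed.

End Sums.

Definition vnorm2 n (x : Vec n) : R := Rsum (fun a => Cnorm2 (x a)).
Definition vdot n (x y : Vec n) : R :=
  Rsum (fun a => Cre (x a) * Cre (y a) + Cim (x a) * Cim (y a)).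
Definition vsub n (x y : Vec n) : Vec n := fun a => Cminus (x a) (y a).
Definition vscale n (c : R) (x : Vec n) : Vec n := fun a => Cmult (RtoC c) (x a).
Definition mxv n (M : Mat n) (x : Vec n) : Vec n := fun a => Csum (fun b => Cmult (M a b) (x b)).

Section Vectors.
Variable n : nat.
Implicit Types (x y z : Vec n) (M : Mat n).

Lemma vnorm2_ge0 x : 0 <= vnorm2 x.
Proof. by apply: Rsum_ge0 => a; apply: Cnorm2_ge0. Qed.

Lemma vnorm2_zero : vnorm2 (zeroVec n) = 0.
Proof. by apply: Rsum_eq0 => a; rewrite /Cnorm2 /=; ring. Qed.

Lemma vnorm2_eq0 x : vnorm2 x = 0 -> x = zeroVec n.
Proof.
move=> x0; apply: functional_extensionality => a.
have := Rsum_ge_term a (fun b => Cnorm2_ge0 (x b)).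
rewrite -/(vnorm2 x) x0 /Cnorm2 => xa0.
by apply: C_ext => /=; nra.
Qed.

Lemma vnorm2_scale c x : vnorm2 (vscale c x) = c * c * vnorm2 x.
Proof. by rewrite -Rsum_mull; apply: Rsum_ext => a; rewrite /Cnorm2 /=; ring. Qed.

Lemma vnorm2_subC x y : vnorm2 (vsub x y) = vnorm2 (vsub y x).
Proof. by apply: Rsum_ext => a; rewrite /Cnorm2 /=; ring. Qed.

Lemma vnorm2_sub0 x : vnorm2 (vsub x (zeroVec n)) = vnorm2 x.
Proof. by apply: Rsum_ext => a; rewrite /Cnorm2 /=; ring. Qed.

Lemma vnorm2_sub_le x y z :
  vnorm2 (vsub x z) <= 2 * vnorm2 (vsub x y) + 2 * vnorm2 (vsub y z).
Proof.
rewrite -!Rsum_mull -Rsum_split; apply: Rsum_le => a; rewrite /Cnorm2 /=.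
have := Rle_0_sqr (Cre (x a) - 2 * Cre (y a) + Cre (z a)).
have := Rle_0_sqr (Cim (x a) - 2 * Cim (y a) + Cim (z a)).
rewrite /Rsqr; nra.
Qed.

Lemma vdot_self x : vdot x x = vnorm2 x.
Proof. by []. Qed.

Lemma vdotC x y : vdot x y = vdot y x.
Proof. by apply: Rsum_ext => a; ring. Qed.

Lemma vdot0l x : vdot (zeroVec n) x = 0.
Proof. by apply: Rsum_eq0 => a /=; ring. Qed.

Lemma vscale_scale c d x : vscale c (vscale d x) = vscale (c * d) x.
Proof. by apply: functional_extensionality => a; Cring. Qed.

Lemma vscale1 x : vscale 1 x = x.
Proof. by apply: functional_extensionality => a; Cring. Qed.

Lemma vsub_scale c x y : vsub (vscale c x) (vscale c y) = vscale c (vsub x y).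
Proof. by apply: functional_extensionality => a; Cring. Qed.

Lemma mxv_sub M x y : mxv M (vsub x y) = vsub (mxv M x) (mxv M y).
Proof.
apply: functional_extensionality => a; rewrite /mxv /vsub -Csum_sub.
by apply: Csum_ext => b; Cring.
Qed.

Lemma mxv_scale M c x : mxv M (vscale c x) = vscale c (mxv M x).
Proof.
apply: functional_extensionality => a; rewrite /mxv /vscale -Csum_mull.
by apply: Csum_ext => b; Cring.
Qed.

End Vectors.

Section Unitary.
Variables (n : nat) (Th : Mat n).
Implicit Types (x : Vec n) (M : Mat n).

Lemma inU_vnorm2 M x : inU Th M -> vnorm2 (mxv M x) = vnorm2 x.
Proof.
move=> [orthoM _].
have E : Csum (fun a => Cmult (mxv M x a) (Cconj (mxv M x a)))
       = Csum (fun b => Cmult (x b) (Cconj (x b))).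
  transitivity (Csum (fun a => Csum (fun b => Csum (fun c =>
      Cmult (Cmult (M a b) (Cconj (M a c))) (Cmult (x b) (Cconj (x c))))))).
    apply: Csum_ext => a; rewrite /mxv -Csum_conj -Csum_mulr.
    by apply: Csum_ext => b; rewrite -Csum_mull; apply: Csum_ext => c; Cring.
  rewrite Csum_exchange; apply: Csum_ext => b; rewrite Csum_exchange.
  rewrite -[RHS](Csum_kron (fun c => Cmult (x b) (Cconj (x c)))).
  by apply: Csum_ext => c; rewrite Csum_mulr orthoM; Cring.
have := f_equal Cre E; rewrite !Cre_Csum => ReE.
rewrite /vnorm2 (Rsum_ext (G := fun a => Cre (Cmult (mxv M x a) (Cconj (mxv M x a))))).
  by rewrite ReE; apply: Rsum_ext => a; rewrite /Cnorm2 /=; ring.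
by move=> a; rewrite /Cnorm2 /=; ring.
Qed.

Lemma inU_entry_bound M a b : inU Th M ->
  -1 <= Cre (M a b) <= 1 /\ -1 <= Cim (M a b) <= 1.
Proof.
move=> [orthoM _].
have col_norm : Rsum (fun k => Cnorm2 (M k b)) = 1.
  have := f_equal Cre (orthoM b b); rewrite Cre_Csum /kron eqxx /= => <-.
  by apply: Rsum_ext => k; rewrite /Cnorm2 /=; ring.
have := Rsum_ge_term a (fun k => Cnorm2_ge0 (M k b)).
rewrite col_norm /Cnorm2 => le1.
have := Rle_0_sqr (Cre (M a b)); have := Rle_0_sqr (Cim (M a b)); rewrite /Rsqr => ? ?.
by split; split; nra.
Qed.

End Unitary.

Definition mx_close n (d : R) (M M' : Mat n) : Prop :=
  forall a b, Rabs (Cre (M a b) - Cre (M' a b)) < d /\ Rabs (Cim (M a b) - Cim (M' a b)) < d.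

Lemma mxv_close_le n (M M' : Mat n) d x : mx_close d M M' ->
  vnorm2 (vsub (mxv M x) (mxv M' x)) <= INR n * 2 ^ n * 2 * (d * d) * vnorm2 x.
Proof.
move=> closeMM'.
have -> : INR n * 2 ^ n * 2 * (d * d) * vnorm2 x
         = Rsum (fun _ : 'I_n => 2 ^ n * Rsum (fun b => 2 * (d * d) * Cnorm2 (x b))).
  by rewrite Rsum_const Rsum_mull /vnorm2; ring.
apply: Rsum_le => a; rewrite /vsub /mxv -Csum_sub.
apply: Rle_trans (Cnorm2_Csum_le _) _.
apply: Rmult_le_compat_l; first by apply: pow_le; lra.
apply: Rsum_le => b.
have [/Rabs_def2 Re_close /Rabs_def2 Im_close] := closeMM' a b.
have := Cnorm2_ge0 (x b).
have -> : Cnorm2 (Cminus (Cmult (M a b) (x b)) (Cmult (M' a b) (x b)))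
        = Cnorm2 (Cminus (M a b) (M' a b)) * Cnorm2 (x b).
  by rewrite /Cnorm2 /=; ring.
have : Cnorm2 (Cminus (M a b) (M' a b)) <= 2 * (d * d) by rewrite /Cnorm2 /=; nra.
nra.
Qed.

Lemma eqPt_eq n (p q : Pt n) : eqPt p q -> p = q.
Proof.
case: p q => [p0 p'] [q0 q'] [/= -> pq].
by congr pair; apply: functional_extensionality.
Qed.

Section NormalForm.
Variables (n : nat) (Th : Mat n).
Implicit Types (x w : Vec n) (M : Mat n) (T : Vec n -> Vec n).

Definition affH (a b : R) T (z : Pt n) : Pt n :=
  (Cplus (Cmult (RtoC a) z.1) (Cmult Ci (RtoC b)), T z.2).

Definition dilrot (a : R) M x : Vec n := vscale (sqrt a) (mxv M x).

Definition is_dilrot (a : R) T : Prop := 0 < a /\ exists M, inU Th M /\ T = dilrot a M.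

Definition represents (f : Pt n -> Pt n) (a b : R) T : Prop :=
  forall z, inH z -> f z = affH a b T z.

Lemma Cre_hw w x : Cre (hw Th w x) = - vnorm2 w - 2 * vdot x w.
Proof.
rewrite /hw /=; rewrite !Cre_Csum !Cim_Csum.
have -> : Rsum (fun a => Cim (Csum (fun b =>
            Cmult (Cmult (Cconj (Th a b)) (Cconj (x a))) (Cconj (w b)))))
        = - Rsum (fun a => Cim (Csum (fun b => Cmult (Cmult (Th a b) (x a)) (w b)))).
  rewrite -Rsum_opp; apply: Rsum_ext => a; rewrite !Cim_Csum -Rsum_opp.
  by apply: Rsum_ext => b /=; ring.
have -> : Rsum (fun a => Cre (Cmult (x a) (Cconj (w a)))) = vdot x w.
  by apply: Rsum_ext => a /=; ring.
rewrite /vnorm2; ring.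
Qed.

Lemma hw_zeroVec x : hw Th (zeroVec n) x = C0.
Proof.
rewrite /hw /zeroVec Rsum_eq0 => [|a]; last by rewrite /Cnorm2 /=; ring.
rewrite !Csum_eq0; try (move=> a; try apply: Csum_eq0 => b).
all: Cring.
Qed.

Lemma nf_zeroVec a b M : nf Th a b (zeroVec n) M = affH a b (dilrot a M).
Proof.
apply: functional_extensionality => z; rewrite /nf /affH hw_zeroVec.
congr pair; first by Cring.
by apply: functional_extensionality => c; rewrite /dilrot /vscale /mxv /zeroVec; Cring.
Qed.

Lemma represents_nf f a b M :
  agreeOnH f (nf Th a b (zeroVec n) M) -> represents f a b (dilrot a M).
Proof. by move=> fnf z Hz; rewrite -nf_zeroVec; apply: eqPt_eq; apply: fnf. Qed.

Lemma Cre_nf a b w M (x0 : R) x :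
  Cre (nf Th a b w M (RtoC x0, x)).1 = a * x0 - vnorm2 w - 2 * vdot x w.
Proof. by rewrite /nf; cbn [fst snd Cre Cim Cplus Cmult RtoC Ci]; rewrite Cre_hw; ring. Qed.

Lemma nf_inH_far a b w M x : 0 < a ->
  exists X : R, forall x0 : R, x0 <= X -> inH (RtoC x0, x) /\ inH (nf Th a b w M (RtoC x0, x)).
Proof.
move=> a0; set c := Cre (nf Th a b w M (RtoC 0, x)).1 + vnorm2 (nf Th a b w M (RtoC 0, x)).2.
exists (Rmin (- (Rabs c + 1) / a) (- vnorm2 x - 1)) => x0 x0X.
have x0_le1 := Rle_trans _ _ _ x0X (Rmin_l _ _).
have x0_le2 := Rle_trans _ _ _ x0X (Rmin_r _ _).
split; first by rewrite /inH /= -/(vnorm2 x); lra.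
change (Cre (nf Th a b w M (RtoC x0, x)).1 + vnorm2 (nf Th a b w M (RtoC 0, x)).2 < 0).
have : a * x0 <= a * (- (Rabs c + 1) / a) by apply: Rmult_le_compat_l; lra.
have -> : a * (- (Rabs c + 1) / a) = - (Rabs c + 1) by field; lra.
have := Rle_abs c; rewrite /c !Cre_nf; lra.
Qed.

Lemma vnorm2_dilrot a M x : 0 <= a -> inU Th M -> vnorm2 (dilrot a M x) = a * vnorm2 x.
Proof. by move=> a0 UM; rewrite vnorm2_scale (inU_vnorm2 _ UM) sqrt_sqrt. Qed.

Lemma affH_inH a b T z : is_dilrot a T -> inH z -> inH (affH a b T z).
Proof.
case=> a0 [M [UM ->]] Hz.
change (Cre (affH a b (dilrot a M) z).1 + vnorm2 (dilrot a M z.2) < 0).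
have : Cre z.1 + vnorm2 z.2 < 0 := Hz.
by rewrite vnorm2_dilrot /=; [nra | lra | done].
Qed.

Lemma Cre_affH a b T z : Cre (affH a b T z).1 = a * Cre z.1.
Proof. by rewrite /affH /=; ring. Qed.

Lemma affH_comp a1 b1 T1 a2 b2 T2 z :
  affH a1 b1 T1 (affH a2 b2 T2 z) = affH (a1 * a2) (a1 * b2 + b1) (T1 \o T2) z.
Proof. by rewrite /affH /=; congr pair; Cring. Qed.

Lemma affH_id z : affH 1 0 id z = z.
Proof. by case: z => z0 x; rewrite /affH /=; congr pair; Cring. Qed.

Lemma affH_inj a b T a' b' T' :
  (forall z, inH z -> affH a b T z = affH a' b' T' z) -> [/\ a = a', b = b' & T = T'].
Proof.
move=> aff_eq.
have at_x x : [/\ a = a', b = b' & T x = T' x].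
  set X := - vnorm2 x - 1.
  have E1 := aff_eq (RtoC X, x) ltac:(rewrite /inH /= /X -/(vnorm2 x); lra).
  have E2 := aff_eq (RtoC (X - 1), x) ltac:(rewrite /inH /= /X -/(vnorm2 x); lra).
  move: (f_equal (fun p => Cre p.1) E1) (f_equal (fun p => Cre p.1) E2).
  move: (f_equal (fun p => Cim p.1) E1) (f_equal snd E1); rewrite /affH /= => ? ? ? ?.
  by split=> //; nra.
have [-> -> _] := at_x (zeroVec n); split=> //.
by apply: functional_extensionality => x; case: (at_x x).
Qed.

Lemma dist2_affH1 b T z : dist2 (affH 1 b T z) z = b * b + vnorm2 (vsub (T z.2) z.2).
Proof. by rewrite /dist2 /affH /Cnorm2 /=; congr Rplus; ring. Qed.

End NormalForm.

Lemma compactPt_bounded n (K : Pt n -> Prop) :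
  compactPt K -> exists M, 0 <= M /\ forall z, K z -> vnorm2 z.2 <= M.
Proof.
move=> cK; apply: NNPP => unbounded.
have big k : exists z, K z /\ INR k < vnorm2 z.2.
  apply: NNPP => none; apply: unbounded; exists (INR k); split; first exact: pos_INR.
  by move=> z Kz; apply: Rnot_lt_le => ltkz; apply: none; exists z.
have [u Ku] := functional_choice _ big.
have [phi [p [phi_incr [_ conv]]]] := cK u (fun k => proj1 (Ku k)).
have [N HN] := conv 1 Rlt_0_1.
have [m Hm] := INR_archimed 1 (2 + 2 * vnorm2 p.2) Rlt_0_1.
have phi_ge k : (k <= phi k)%nat.
  by elim: k => // k IHk; apply: leq_ltn_trans IHk (phi_incr k).
set k := (N + m)%nat.
have near_p := HN k (leq_addr m N).
have far := proj2 (Ku (phi k)).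
have : INR m <= INR (phi k).
  by apply/le_INR/leP; apply: leq_trans (leq_addl N m) (phi_ge k).
have := vnorm2_sub_le (u (phi k)).2 p.2 (zeroVec n); rewrite !vnorm2_sub0.
have : vnorm2 (vsub (u (phi k)).2 p.2) <= dist2 (u (phi k)) p.
  by have := Cnorm2_ge0 (Cminus (u (phi k)).1 p.1); rewrite /dist2 /vnorm2 /vsub; lra.
lra.
Qed.

Lemma up_gt0 u : 0 <= u -> (0 < up u)%Z.
Proof. by move=> u0; have [upu _] := archimed u; apply: lt_IZR => /=; lra. Qed.

Section Pigeonhole.
Variable d : R.
Hypothesis d_gt0 : 0 < d.

Let div_d_ge0 x : 0 <= x -> 0 <= x / d.
Proof. by move=> x0; apply: Rmult_le_pos x0 (Rlt_le _ _ (Rinv_0_lt_compat _ d_gt0)). Qed.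

Definition grid_index (x : R) : nat := Z.to_nat (up ((x + 1) / d)).
Definition grid_size : nat := Z.to_nat (up (2 / d)).

Lemma grid_index_close x y : -1 <= x -> -1 <= y -> grid_index x = grid_index y -> Rabs (x - y) < d.
Proof.
rewrite /grid_index => x1 y1.
set u := (x + 1) / d; set v := (y + 1) / d.
have u0 : 0 <= u by apply: div_d_ge0; lra.
have v0 : 0 <= v by apply: div_d_ge0; lra.
move=> /Z2Nat.inj uv; have {}uv : up u = up v by apply: uv; apply: Z.lt_le_incl; apply: up_gt0.
have [u1 u2] := archimed u; have [v1 v2] := archimed v; rewrite uv in u1 u2.
have -> : x - y = d * (u - v) by rewrite /u /v; field; lra.
rewrite Rabs_mult Rabs_pos_eq; last lra.
have : Rabs (u - v) < 1 by apply: Rabs_def1; lra.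
nra.
Qed.

Lemma grid_index_le x : -1 <= x <= 1 -> (grid_index x <= grid_size)%nat.
Proof.
move=> x1; rewrite /grid_index /grid_size; apply/leP.
have xd0 : 0 <= (x + 1) / d by apply: div_d_ge0; lra.
have d0 : 0 <= 2 / d by apply: div_d_ge0; lra.
apply/Z2Nat.inj_le; [exact: Z.lt_le_incl (up_gt0 xd0) | exact: Z.lt_le_incl (up_gt0 d0) |].
have [xd1 xd2] := archimed ((x + 1) / d); have [d1 d2] := archimed (2 / d).
have : (x + 1) / d <= 2 / d by apply: Rmult_le_compat_r; [apply/Rlt_le/Rinv_0_lt_compat | lra].
move=> le2; have : IZR (up ((x + 1) / d)) < IZR (up (2 / d) + 1) by rewrite plus_IZR; lra.
by move/lt_IZR; lia.
Qed.

Definition mx_cell n (M : Mat n) : {ffun 'I_n * 'I_n * bool -> 'I_grid_size.+1} :=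
  [ffun p => inord (grid_index (if p.2 then Cre (M p.1.1 p.1.2) else Cim (M p.1.1 p.1.2)))].

Lemma mx_cell_close n Th (M M' : Mat n) :
  inU Th M -> inU Th M' -> mx_cell M = mx_cell M' -> mx_close d M M'.
Proof.
move=> UM UM' cellMM' a b.
have [[ReM1 ReM2] [ImM1 ImM2]] := inU_entry_bound a b UM.
have [[ReM'1 ReM'2] [ImM'1 ImM'2]] := inU_entry_bound a b UM'.
have same_index (re : bool) : grid_index (if re then Cre (M a b) else Cim (M a b))
                            = grid_index (if re then Cre (M' a b) else Cim (M' a b)).
  have := congr1 (fun c : {ffun _ -> 'I_grid_size.+1} => nat_of_ord (c (a, b, re))) cellMM'.
  by rewrite /= !ffunE /= !inordK // ltnS; apply: grid_index_le; case: re; lra.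
split; apply: grid_index_close; try lra.
  exact: (same_index true).
exact: (same_index false).
Qed.

Lemma inU_seq_close n Th (Ms : nat -> Mat n) (L : nat) : (forall k, inU Th (Ms k)) ->
  exists i j, (L <= i < j)%nat /\ mx_close d (Ms j) (Ms i).
Proof.
move=> UMs; pose cells (k : 'I_#|{ffun 'I_n * 'I_n * bool -> 'I_grid_size.+1}|.+1) :=
  mx_cell (Ms (L + k)%nat).
have /injectivePn [k [k' kk' cellkk']] : ~~ injectiveb cells.
  by apply/negP => /injectiveP/leq_card; rewrite card_ord ltnn.
have late_pair (i j : nat) : (i < j)%nat ->
    mx_cell (Ms (L + j)%nat) = mx_cell (Ms (L + i)%nat) ->
    exists i j, (L <= i < j)%nat /\ mx_close d (Ms j) (Ms i).
  move=> lt_ij cellij; exists (L + i)%nat, (L + j)%nat.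
  by rewrite leq_addr ltn_add2l lt_ij; split=> //; exact: mx_cell_close (UMs _) (UMs _) cellij.
move: kk'; case: (ltngtP k k') => [lt_kk' _ | lt_k'k _ | /val_inj -> ]; last by rewrite eqxx.
  exact: late_pair lt_kk' (esym cellkk').
exact: late_pair lt_k'k cellkk'.
Qed.

End Pigeonhole.

Lemma pow_lt_contract x m k : 0 < x < 1 -> (m < k)%nat -> x ^ k < x ^ m.
Proof.
move=> x01; elim: k => // k IHk; rewrite ltnS leq_eqVlt => /orP [/eqP <- | lt_mk] /=.
  by have := pow_lt x m (proj1 x01); nra.
by have := IHk lt_mk; have := pow_lt x k (proj1 x01); nra.
Qed.

Lemma pow_eventually_lt x r : 0 < x < 1 -> 0 < r -> exists N, forall k, (N <= k)%nat -> x ^ k < r.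
Proof.
move=> x01 r0; have [|N HN] := pow_lt_1_zero x _ r r0; first by rewrite Rabs_pos_eq; lra.
exists N => k /leP Nk; have := HN k Nk.
by rewrite Rabs_pos_eq //; apply/Rlt_le/pow_lt; lra.
Qed.

Lemma small_square c e : 0 <= c -> 0 < e -> exists d, 0 < d /\ c * (d * d) < e.
Proof.
move=> c0 e0; exists (Rmin 1 (e / (c + 1))).
have d0 : 0 < Rmin 1 (e / (c + 1)) by apply: Rmin_pos; [lra | apply: Rdiv_lt_0_compat; lra].
split=> //; have d1 := Rmin_l 1 (e / (c + 1)); have de := Rmin_r 1 (e / (c + 1)).
have : (c + 1) * (e / (c + 1)) = e by field; lra.
have : c * (Rmin 1 (e / (c + 1)) * Rmin 1 (e / (c + 1))) <= c * Rmin 1 (e / (c + 1)).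
  by apply: Rmult_le_compat_l => //; nra.
nra.
Qed.

Lemma translation_eq0_of_contraction n (t : R) (w wh : Vec n) : 0 < t < 1 ->
  (forall x, - vnorm2 wh - 2 * vdot x wh = t * (- vnorm2 w - 2 * vdot x w)) ->
  w = zeroVec n.
Proof.
move=> t01 affine_eq; apply: vnorm2_eq0.
have := affine_eq (zeroVec n); have := affine_eq w; have := affine_eq wh.
rewrite !vdot0l !vdot_self (vdotC w wh) => at_wh at_w at_0.
have dot_t : vdot wh w = t * vnorm2 w by nra.
have dot_1 : t * (vdot wh w - vnorm2 w) = 0 by nra.
have : t * ((1 - t) * vnorm2 w) = 0 by have := f_equal (Rmult t) dot_t; lra.
by case/Rmult_integral=> [|/Rmult_integral []]; lra.
Qed.

Section Conjugation.
Variables (n : nat) (Th : Mat n).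
Implicit Types (x u : Vec n) (M B : Mat n).

Definition conj_map a (R B R' : Mat n) x : Vec n := vscale (sqrt a) (mxv R (mxv B (mxv R' x))).

Lemma conj_map_close a c (R1 R2 R1' R2' : Mat n) B u :
  inU Th R1 -> inU Th R2 -> inU Th B -> 0 <= a ->
  (forall x, mxv R1 (mxv R1' x) = x) -> (forall x, mxv R2 (mxv R2' x) = x) ->
  (forall x, vnorm2 (vsub (mxv R2 x) (mxv R1 x)) <= c * vnorm2 x) ->
  vnorm2 (vsub (conj_map a R2 B R2' u) (conj_map a R1 B R1' u))
    <= 4 * c * vnorm2 (conj_map a R1 B R1' u).
Proof.
move=> U1 U2 UB a0 inv1 inv2 close12.
have norm1 : vnorm2 (mxv R1' u) = vnorm2 u by rewrite -(inU_vnorm2 _ U1) inv1.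
have norm2 : vnorm2 (mxv R2' u) = vnorm2 u by rewrite -(inU_vnorm2 _ U2) inv2.
have R'_close : vnorm2 (vsub (mxv R2' u) (mxv R1' u)) <= c * vnorm2 u.
  rewrite -(inU_vnorm2 _ U1) mxv_sub inv1 -{2}[u]inv2 vnorm2_subC -norm2.
  exact: close12.
set v := mxv B (mxv R2' u).
have := vnorm2_sub_le (mxv R2 v) (mxv R1 v) (mxv R1 (mxv B (mxv R1' u))).
rewrite -mxv_sub (inU_vnorm2 _ U1) /v -mxv_sub (inU_vnorm2 _ UB).
have := close12 v; rewrite /v (inU_vnorm2 _ UB) norm2.
rewrite /conj_map vsub_scale !vnorm2_scale sqrt_sqrt // (inU_vnorm2 _ U1) (inU_vnorm2 _ UB) norm1.
by nra.
Qed.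

End Conjugation.

Section DiscreteSubgroup.
Variables (n : nat) (Th : Mat n) (G : (Pt n -> Pt n) -> Prop).
Hypothesis HG : isSubgroup Th G.
Variables (phi : Pt n -> Pt n) (t s : R) (A : Mat n).
Hypotheses (Gphi : G phi) (t01 : 0 < t < 1) (UA : inU Th A).
Hypothesis phi_nf : agreeOnH phi (nf Th t s (zeroVec n) A).
Implicit Types (f g h : Pt n -> Pt n) (T : Vec n -> Vec n) (a b : R).

Lemma G_translation_free f : G f ->
  exists a b B, 0 < a /\ inU Th B /\ agreeOnH f (nf Th a b (zeroVec n) B).
Proof.
move=> Gf; have [G_aut [_ [G_comp _]]] := HG.
have [a [b [w [B [a0 [UB f_nf]]]]]] := G_aut f Gf.
have [h [Gh h_phif]] := G_comp phi f Gphi Gf.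
have [a' [b' [w' [B' [_ [_ h_nf]]]]]] := G_aut h Gh.
suff w0 : w = zeroVec n by exists a, b, B; rewrite -w0.
apply: (translation_eq0_of_contraction (t := t) (wh := w')) => // x.
have [X far] := nf_inH_far Th b w B x a0.
have at_x0 (x0 : R) : x0 <= X ->
    a' * x0 - vnorm2 w' - 2 * vdot x w' = t * (a * x0 - vnorm2 w - 2 * vdot x w).
  move=> /far [Hz Hfz].
  have := f_equal (fun p => Cre p.1) (eqPt_eq (h_phif _ Hz)).
  rewrite /= (eqPt_eq (h_nf _ Hz)) (eqPt_eq (f_nf _ Hz)) (eqPt_eq (phi_nf Hfz)).
  by rewrite nf_zeroVec Cre_affH !Cre_nf.
have := at_x0 X (Rle_refl X); have := at_x0 (X - 1) ltac:(lra); nra.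
Qed.

Definition in_G_as f a b T := G f /\ represents f a b T /\ is_dilrot Th a T.

Lemma G_in_G_as f : G f -> exists a b T, in_G_as f a b T.
Proof.
move=> Gf; have [a [b [B [a0 [UB f_nf]]]]] := G_translation_free Gf.
exists a, b, (dilrot a B); split=> //; split; first exact: (represents_nf f_nf).
by split=> //; exists B.
Qed.

Lemma represents_unique f a b T a' b' T' :
  represents f a b T -> represents f a' b' T' -> [/\ a = a', b = b' & T = T'].
Proof. by move=> fT fT'; apply: affH_inj => z Hz; rewrite -fT // -fT'. Qed.

Lemma in_G_as_comp f a1 b1 T1 g a2 b2 T2 :
  in_G_as f a1 b1 T1 -> in_G_as g a2 b2 T2 ->
  exists h, in_G_as h (a1 * a2) (a1 * b2 + b1) (T1 \o T2).
Proof.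
move=> [Gf [fT _]] [Gg [gT gdil]]; have [_ [_ [G_comp _]]] := HG.
have [h [Gh h_fg]] := G_comp f g Gf Gg.
have hT : represents h (a1 * a2) (a1 * b2 + b1) (T1 \o T2).
  move=> z Hz; rewrite (eqPt_eq (h_fg z Hz)) gT // fT; first exact: affH_comp.
  exact: affH_inH gdil Hz.
have [a [b [T [_ [hT' hdil]]]]] := G_in_G_as Gh.
have [<- <- <-] := represents_unique hT' hT.
by exists h.
Qed.

Lemma in_G_as_inv f a b T : in_G_as f a b T ->
  exists g T', in_G_as g (/ a) (- b / a) T' /\ cancel T' T /\ cancel T T'.
Proof.
move=> [Gf [fT fdil]]; have a0 := proj1 fdil; have [_ [_ [_ G_inv]]] := HG.
have [g [Gg [g_f f_g]]] := G_inv f Gf.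
have [a' [b' [T' [_ [gT gdil]]]]] := G_in_G_as Gg.
have [aa' ab' TT'] : [/\ a * a' = 1, a * b' + b = 0 & T \o T' = id].
  apply: affH_inj => z Hz; rewrite affH_id -affH_comp -fT; last exact: affH_inH gdil Hz.
  by rewrite -gT // (eqPt_eq (f_g z Hz)).
have [_ _ T'T] : [/\ a' * a = 1, a' * b + b' = 0 & T' \o T = id].
  apply: affH_inj => z Hz; rewrite affH_id -affH_comp -gT; last exact: affH_inH fdil Hz.
  by rewrite -fT // (eqPt_eq (g_f z Hz)).
have -> : / a = a' by apply: (Rmult_eq_reg_l a); [rewrite Rinv_r |]; lra.
have -> : - b / a = b'.
  apply: (Rmult_eq_reg_l a); last lra.
  by rewrite (_ : a * (- b / a) = - b); [lra | field; lra].
exists g, T'; split=> //.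
by split=> x; [exact: (congr1 (@^~ x) TT') | exact: (congr1 (@^~ x) T'T)].
Qed.

Lemma in_G_as_id e : G e -> agreeOnH e id -> in_G_as e 1 0 id.
Proof.
move=> Ge e_id; have [a [b [T [_ [eT edil]]]]] := G_in_G_as Ge.
have [a1 b0 Tid] : [/\ a = 1, b = 0 & T = id].
  by apply: affH_inj => z Hz; rewrite affH_id -eT // (eqPt_eq (e_id z Hz)).
by subst a b T.
Qed.

Lemma in_G_as_pow k : exists F T, in_G_as F (t ^ k) (s * (1 - t ^ k) / (1 - t)) T.
Proof.
have phi_dil : in_G_as phi t s (dilrot t A).
  by split=> //; split; [exact: (represents_nf phi_nf) | split; [lra | exists A]].
elim: k => [|k [F [T FT]]].
  have [_ [[e [Ge e_id]] _]] := HG.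
  by exists e, id; rewrite /= (_ : s * (1 - 1) / (1 - t) = 0); [exact: in_G_as_id | field; lra].
have [h hT] := in_G_as_comp phi_dil FT.
exists h, (dilrot t A \o T); move: hT; congr in_G_as.
by rewrite /=; field; lra.
Qed.

Lemma in_G_as_conj psi a b B : in_G_as psi a b (dilrot a B) -> forall k,
  exists R R' X, inU Th R /\ (forall x, mxv R (mxv R' x) = x) /\
    in_G_as X a (s * (1 - a) / (1 - t) + t ^ k * (b - s * (1 - a) / (1 - t)))
      (conj_map a R B R').
Proof.
move=> psiT k; have a0 := proj1 (proj2 (proj2 psiT)).
have [F [TF FT]] := in_G_as_pow k.
have [Fi [TFi [FiT [TFiK _]]]] := in_G_as_inv FT.
have [P PT] := in_G_as_comp psiT FiT.
have [X XT] := in_G_as_comp FT PT.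
have [_ [_ [tk0 [R [UR TFR]]]]] := FT; have [_ [_ [_ [R' [_ TFiR']]]]] := FiT.
have sqrt_tk : sqrt (t ^ k) * sqrt (/ t ^ k) = 1.
  rewrite -sqrt_mult ?Rinv_r; [exact: sqrt_1 | lra | lra |].
  exact/Rlt_le/Rinv_0_lt_compat.
exists R, R', X; split=> //; split.
  move=> x; have := TFiK x; rewrite TFR TFiR' /dilrot mxv_scale vscale_scale.
  by rewrite sqrt_tk vscale1.
move: XT; congr in_G_as; first by field; lra.
  by field; lra.
apply: functional_extensionality => x /=.
rewrite TFR TFiR' /conj_map /dilrot !mxv_scale !vscale_scale.
by congr vscale; rewrite -[RHS]Rmult_1_r -sqrt_tk; ring.
Qed.

Hypothesis Hdisc : isDiscrete G.

Lemma G_near_identity_trivial : exists eta, 0 < eta /\ forall h b T,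
  in_G_as h 1 b T -> b * b < eta -> (forall x, vnorm2 (vsub (T x) x) <= eta * vnorm2 x) ->
  b = 0.
Proof.
have [_ [[e [Ge e_id]] _]] := HG.
have [K [eps [cK [KH [eps0 isolated]]]]] := Hdisc Ge.
have [M [M0 KM]] := compactPt_bounded cK.
have eta_M : eps * eps / (2 * (M + 1)) * (M + 1) = eps * eps / 2 by field; lra.
exists (eps * eps / (2 * (M + 1))); split; first by apply: Rdiv_lt_0_compat; nra.
move=> h b T [Gh [hT _]] small_b small_T.
have h_e : agreeOnH h e.
  apply: isolated => // z Kz; have Hz := KH z Kz.
  rewrite hT // (eqPt_eq (e_id z Hz)) dist2_affH1.
  by have := small_T z.2; have := KM z Kz; have := vnorm2_ge0 z.2; nra.
pose z0 : Pt n := (RtoC (-1), zeroVec n).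
have Hz0 : inH z0 by rewrite /inH /= -/(vnorm2 (zeroVec n)) vnorm2_zero; lra.
have [/(f_equal Cim) + _] := h_e z0 Hz0.
by rewrite hT // (eqPt_eq (e_id z0 Hz0)) /=; lra.
Qed.

Lemma G_translation_relation psi a b B : G psi -> inU Th B ->
  agreeOnH psi (nf Th a b (zeroVec n) B) -> 0 < a -> b * (1 - t) = s * (1 - a).
Proof.
move=> Gpsi UB psi_nf a0.
have psiT : in_G_as psi a b (dilrot a B).
  by split=> //; split; [exact: (represents_nf psi_nf) | split=> //; exists B].
set c := s * (1 - a) / (1 - t); suff -> : b = c by rewrite /c; field; lra.
apply: NNPP => bc; set d := b - c.
have [eta [eta0 near_id_trivial]] := G_near_identity_trivial.
have [Rs Rs_spec] := functional_choice _ (in_G_as_conj psiT).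
have URs k : inU Th (Rs k) by have [? [? []]] := Rs_spec k.
set C := INR n * 2 ^ n * 2.
have C0 : 0 <= C by have := pos_INR n; have := pow_le 2 n ltac:(lra); rewrite /C; nra.
have [del [del0 del_small]] := small_square (ltac:(lra) : 0 <= 4 * C) eta0.
have [r [r0 r_small]] := small_square (ltac:(nra) : 0 <= d * d) eta0.
have [N tN] := pow_eventually_lt t01 r0.
have [i [j [/andP [Ni lt_ij] close_ij]]] := inU_seq_close del0 N URs.
have [Ri' [Xi [_ [invi Xi_as]]]] := Rs_spec i.
have [Rj' [Xj [_ [invj Xj_as]]]] := Rs_spec j.
have [Yi [TYi [Yi_as [TYiK _]]]] := in_G_as_inv Xi_as.
have [h h_as] := in_G_as_comp Xj_as Yi_as.
have tji := pow_lt_contract t01 lt_ij; have tj0 := pow_lt t j (proj1 t01).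
have tir := tN i Ni.
suff : (t ^ j - t ^ i) * d = 0 by case/Rmult_integral; rewrite /d; lra.
apply: (near_id_trivial h _ (conj_map a (Rs j) B Rj' \o TYi)).
- by move: h_as; congr in_G_as; [field | rewrite /d /c; field]; lra.
- have gap : (t ^ j - t ^ i) * (t ^ j - t ^ i) <= r * r by nra.
  have := Rmult_le_compat_r (d * d) _ _ (ltac:(nra) : 0 <= d * d) gap; nra.
move=> x /=; rewrite -{2 3}[x]TYiK.
have := @conj_map_close n Th a (C * (del * del)) (Rs i) (Rs j) Ri' Rj' B (TYi x)
  (URs i) (URs j) UB (Rlt_le _ _ a0) invi invj (fun y => mxv_close_le y close_ij).
by have := vnorm2_ge0 (conj_map a (Rs i) B Ri' (TYi x)); nra.
Qed.

End DiscreteSubgroup.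

Unset Implicit Arguments.
Set Strict Implicit.

Theorem mainTheorem3 (n : nat) (Th : Mat n) (G : (Pt n -> Pt n) -> Prop)
  (Hn : (1 <= n)%nat) (Hskew : skew Th) (Hnz : nonzero_mat Th)
  (HG : isSubgroup Th G) (Hdisc : isDiscrete G)
  (phi : Pt n -> Pt n) (t s : R) (A : Mat n)
  (Hphi : G phi) (Ht : 0 < t < 1) (HA : inU Th A)
  (Hphinf : agreeOnH phi (nf Th t s (zeroVec n) A)) :
  forall psi, G psi ->
    exists (a b : R) (B : Mat n),
      0 < a /\ inU Th B /\ agreeOnH psi (nf Th a b (zeroVec n) B) /\
      b * (1 - t) = s * (1 - a) /\
      (a <> 1 -> b / (1 - a) = s / (1 - t)).
Proof.
(* [Hn], [Hskew] and [Hnz] matter only for the normal form of automorphisms, which [isAut]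
   takes as given. *)
move=> psi Gpsi.
have [a [b [B [a0 [UB psi_nf]]]]] := G_translation_free HG Hphi Ht Hphinf Gpsi.
have rel := G_translation_relation HG Hphi Ht HA Hphinf Hdisc Gpsi UB psi_nf a0.
exists a, b, B; do 4 split=> //.
by move=> a1; field_simplify_eq; lra.
Qed.
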